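(* If $\Gamma ; \Delta \vdash \mathcal{C}$ in $\lambda_{\text{act}}$, then $[\![\Gamma]\!] ; [\![\Delta]\!] \vdash [\![\mathcal{C}]\!]$ in $\lambda_{\text{ch}}$.
   Context: $\lambda_{\text{act}}$ is a concurrent fine-grain call-by-value $\lambda$-calculus with actors: types $A ::= \mathbf{1} \mid A \to^{C} B \mid \mathsf{ActorRef}(A)$ (the annotation $C$ on an arrow is the mailbox type of the actor evaluating the function), computations include $\mathsf{spawn}\, M$, $\mathsf{send}\, V\, W$, $\mathsf{receive}$, $\mathsf{self}$; term judgements are $\Gamma \mid B \vdash M : A$ ($B$ the mailbox type). Configurations are $\mathcal{C} \parallel \mathcal{D}$, $(\nu a)\mathcal{C}$ and actors $\langle a, M, \vec{V}\rangle$ (name $a$, running $M$, mailbox $\vec V$), typed by $\Gamma;\Delta \vdash \mathcal{C}$ with $\Delta$ a linear environment mapping names to mailbox types (rules: Par splits $\Delta$; $(\nu a)\mathcal{C}$ typed if $\Gamma, a{:}\mathsf{ActorRef}(A); \Delta, a{:}A \vdash \mathcal{C}$; $\Gamma, a{:}\mathsf{ActorRef}(A); a{:}A \vdash \langle a,M,\vec V\rangle$ if $\Gamma, a{:}\mathsf{ActorRef}(A) \mid A \vdash M:\mathbf{1}$ and each $V_i : A$). $\lambda_{\text{ch}}$ is the analogous calculus with asynchronous channels: types $\mathbf{1} \mid A\to B \mid \mathsf{Chan}(A)$, primitives $\mathsf{fork}\,M$, $\mathsf{give}\,V\,W$, $\mathsf{take}\,V$, $\mathsf{newCh}$; configurations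 are parallel composition, $(\nu a)\mathcal{C}$, terms $M$ (typed with empty $\Delta$, $M:\mathbf{1}$) and buffers $a(\vec V)$ (typed $\Gamma; a{:}A \vdash a(\vec V)$ when each $V_i : A$), with $(\nu a)\mathcal{C}$ typed if $\Gamma, a{:}\mathsf{Chan}(A); \Delta, a{:}A \vdash \mathcal{C}$. The translation $[\![-]\!]$ from $\lambda_{\text{act}}$ to $\lambda_{\text{ch}}$: on types $[\![\mathsf{ActorRef}(A)]\!] = \mathsf{Chan}([\![A]\!])$, $[\![A \to^{C} B]\!] = [\![A]\!] \to \mathsf{Chan}([\![C]\!]) \to [\![B]\!]$, $[\![\mathbf{1}]\!]=\mathbf{1}$; on values $[\![\lambda x.M]\!] = \lambda x.\lambda ch.([\![M]\!]\, ch)$, identity otherwise; on terms, parameterised by a mailbox channel $ch$: $\mathsf{receive} \mapsto \mathsf{take}\, ch$, $\mathsf{self} \mapsto \mathsf{return}\, ch$, $\mathsf{send}\,V\,W \mapsto \mathsf{give}\,[\![V]\!]\,[\![W]\!]$, $\mathsf{spawn}\,M \mapsto$ create a new channel $chMb$, fork $[\![M]\!]\,chMb$, return $chMb$, application $V\,W \mapsto$ let $f \Leftarrow [\![V]\!]\,[\![W]\!]$ in $f\,ch$, homomorphic on let/return. On configurations the translation is homomorphic on $\parallel$ and $\nu$, and $[\![\langle a, M, \vec V\rangle]\!] = a([\![\vec V]\!]) \parallel ([\![M]\!]\, a)$ (mailbox becomes a buffer, $a$ used as the mailbox channel). Environments $\Gamma$ and $\Delta$ are translated pointwise on their types. *)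

(* Variables (bound by lambda /
   let) and names (bound by nu) are two separate sorts, both represented by
   de Bruijn indices. *)
From Stdlib Require Import List.
Import ListNotations.

(* AFun A C B  is  A ->^C B *)
Inductive aty : Type :=
| AUnit : aty
| AFun : aty -> aty -> aty -> aty
| ARef : aty -> aty.

Inductive aval : Type :=
| AVar : nat -> aval
| AName : nat -> aval
| AUnitV : aval
| ALam : atm -> aval
with atm : Type :=
| ARet : aval -> atm
| ALet : atm -> atm -> atm
| AApp : aval -> aval -> atm
| ASpawn : atm -> atm
| ASend : aval -> aval -> atm
| ARecv : atm
| ASelf : atm.

Inductive aconf : Type :=
| APar : aconf -> aconf -> aconf
| ANu : aconf -> aconf
| AActor : nat -> atm -> list aval -> aconf.

(* Typing environments: Gamma is split into a variable part [G] (list,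
   indexed by de Bruijn variables) and a name part [N] (list, indexed by
   de Bruijn names).  Delta is a finite linear map from names to types. *)
Definition lin (T : Type) := nat -> option T.

Definition lin_empty {T} : lin T := fun _ => None.
Definition lin_single {T} (a : nat) (A : T) : lin T :=
  fun n => if Nat.eqb n a then Some A else None.
Definition lin_ext {T} (D : lin T) (A : T) : lin T :=
  fun n => match n with 0 => Some A | S k => D k end.
Definition lin_split {T} (D D1 D2 : lin T) : Prop :=
  forall n, (D1 n = None /\ D n = D2 n) \/ (D2 n = None /\ D n = D1 n).

(* Gamma |- V : A   and   Gamma | B |- M : A *)
Inductive aval_ty (G N : list aty) : aval -> aty -> Prop :=
| AT_Var : forall x A, nth_error G x = Some A -> aval_ty G N (AVar x) A
| AT_Name : forall a A, nth_error N a = Some A -> aval_ty G N (AName a) A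
| AT_Unit : aval_ty G N AUnitV AUnit
| AT_Lam : forall M A B C, atm_ty (A :: G) N C M B ->
    aval_ty G N (ALam M) (AFun A C B)
with atm_ty (G N : list aty) : aty -> atm -> aty -> Prop :=
| AT_Ret : forall C V A, aval_ty G N V A -> atm_ty G N C (ARet V) A
| AT_Let : forall C M M' A B, atm_ty G N C M A -> atm_ty (A :: G) N C M' B ->
    atm_ty G N C (ALet M M') B
| AT_App : forall C V W A B, aval_ty G N V (AFun A C B) -> aval_ty G N W A ->
    atm_ty G N C (AApp V W) B
| AT_Spawn : forall B M A, atm_ty G N A M AUnit ->
    atm_ty G N B (ASpawn M) (ARef A)
| AT_Send : forall B V W A, aval_ty G N V A -> aval_ty G N W (ARef A) ->
    atm_ty G N B (ASend V W) AUnit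
| AT_Recv : forall A, atm_ty G N A ARecv A
| AT_Self : forall A, atm_ty G N A ASelf (ARef A).

Inductive aconf_ty : list aty -> list aty -> lin aty -> aconf -> Prop :=
| AC_Par : forall G N D D1 D2 c d, lin_split D D1 D2 ->
    aconf_ty G N D1 c -> aconf_ty G N D2 d -> aconf_ty G N D (APar c d)
| AC_Nu : forall G N D A c, aconf_ty G (ARef A :: N) (lin_ext D A) c ->
    aconf_ty G N D (ANu c)
| AC_Actor : forall G N a A M vs, nth_error N a = Some (ARef A) ->
    atm_ty G N A M AUnit -> (forall V, In V vs -> aval_ty G N V A) ->
    aconf_ty G N (lin_single a A) (AActor a M vs).

Inductive cty : Type :=
| CUnit : cty
| CFun : cty -> cty -> cty
| CChan : cty -> cty.

Inductive cval : Type :=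
| CVar : nat -> cval
| CName : nat -> cval
| CUnitV : cval
| CLam : ctm -> cval
with ctm : Type :=
| CRet : cval -> ctm
| CLet : ctm -> ctm -> ctm
| CApp : cval -> cval -> ctm
| CFork : ctm -> ctm
| CGive : cval -> cval -> ctm
| CTake : cval -> ctm
| CNewCh : ctm.

Inductive cconf : Type :=
| CPar : cconf -> cconf -> cconf
| CNu : cconf -> cconf
| CTerm : ctm -> cconf
| CBuf : nat -> list cval -> cconf.

Inductive cval_ty (G N : list cty) : cval -> cty -> Prop :=
| CT_Var : forall x A, nth_error G x = Some A -> cval_ty G N (CVar x) A
| CT_Name : forall a A, nth_error N a = Some A -> cval_ty G N (CName a) A
| CT_Unit : cval_ty G N CUnitV CUnit
| CT_Lam : forall M A B, ctm_ty (A :: G) N M B -> cval_ty G N (CLam M) (CFun A B)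
with ctm_ty (G N : list cty) : ctm -> cty -> Prop :=
| CT_Ret : forall V A, cval_ty G N V A -> ctm_ty G N (CRet V) A
| CT_Let : forall M M' A B, ctm_ty G N M A -> ctm_ty (A :: G) N M' B ->
    ctm_ty G N (CLet M M') B
| CT_App : forall V W A B, cval_ty G N V (CFun A B) -> cval_ty G N W A ->
    ctm_ty G N (CApp V W) B
| CT_Fork : forall M, ctm_ty G N M CUnit -> ctm_ty G N (CFork M) CUnit
| CT_Give : forall V W A, cval_ty G N V A -> cval_ty G N W (CChan A) ->
    ctm_ty G N (CGive V W) CUnit
| CT_Take : forall V A, cval_ty G N V (CChan A) -> ctm_ty G N (CTake V) A
| CT_NewCh : forall A, ctm_ty G N CNewCh (CChan A).

Inductive cconf_ty : list cty -> list cty -> lin cty -> cconf -> Prop :=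
| CC_Par : forall G N D D1 D2 c d, lin_split D D1 D2 ->
    cconf_ty G N D1 c -> cconf_ty G N D2 d -> cconf_ty G N D (CPar c d)
| CC_Nu : forall G N D A c, cconf_ty G (CChan A :: N) (lin_ext D A) c ->
    cconf_ty G N D (CNu c)
| CC_Term : forall G N M, ctm_ty G N M CUnit -> cconf_ty G N lin_empty (CTerm M)
| CC_Buf : forall G N a A vs, nth_error N a = Some (CChan A) ->
    (forall V, In V vs -> cval_ty G N V A) ->
    cconf_ty G N (lin_single a A) (CBuf a vs).

Fixpoint tr_ty (A : aty) : cty :=
  match A with
  | AUnit => CUnit
  | AFun A C B => CFun (tr_ty A) (CFun (CChan (tr_ty C)) (tr_ty B))
  | ARef A => CChan (tr_ty A)
  end.

(* The mailbox-channel parameter ch of the term translation: a variable or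
   a name of lambda_ch. *)
Inductive chref : Type := RVar : nat -> chref | RName : nat -> chref.

Definition chref_val (c : chref) : cval :=
  match c with RVar n => CVar n | RName a => CName a end.

Definition chref_shift (c : chref) : chref :=
  match c with RVar n => RVar (S n) | RName a => RName a end.

(* de Bruijn bookkeeping: [rho] maps lambda_act variables of the source term
   to lambda_ch variables of the target (the translation inserts extra
   binders ch, chMb, f). *)
Definition up (rho : nat -> nat) (n : nat) : nat :=
  match n with 0 => 0 | S k => S (rho k) end.

Fixpoint tr_val (rho : nat -> nat) (V : aval) : cval :=
  match V with
  | AVar x => CVar (rho x)
  | AName a => CName a
  | AUnitV => CUnitV
  (* [[lambda x. M]] = lambda x. lambda ch. ([[M]] ch); in fine-grain
     syntax the body of the outer lambda is  return (lambda ch. ...) *)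
  | ALam M => CLam (CRet (CLam (tr_tm (fun n => match n with
                                           | 0 => 1
                                           | S k => S (S (rho k)) end)
                                (RVar 0) M)))
  end
with tr_tm (rho : nat -> nat) (c : chref) (M : atm) : ctm :=
  match M with
  | ARet V => CRet (tr_val rho V)
  | ALet M1 M2 => CLet (tr_tm rho c M1) (tr_tm (up rho) (chref_shift c) M2)
  (* let f <= [[V]] [[W]] in f ch *)
  | AApp V W => CLet (CApp (tr_val rho V) (tr_val rho W))
                     (CApp (CVar 0) (chref_val (chref_shift c)))
  (* let chMb <= newCh in let _ <= fork ([[M]] chMb) in return chMb *)
  | ASpawn M1 => CLet CNewCh
                   (CLet (CFork (tr_tm (fun n => S (rho n)) (RVar 0) M1))
                         (CRet (CVar 1)))
  | ASend V W => CGive (tr_val rho V) (tr_val rho W)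
  | ARecv => CTake (chref_val c)
  | ASelf => CRet (chref_val c)
  end.

Fixpoint tr_conf (c : aconf) : cconf :=
  match c with
  | APar c1 c2 => CPar (tr_conf c1) (tr_conf c2)
  | ANu c1 => CNu (tr_conf c1)
  | AActor a M vs =>
      CPar (CBuf a (map (tr_val (fun n => n)) vs))
           (CTerm (tr_tm (fun n => n) (RName a) M))
  end.

Definition tr_env (G : list aty) : list cty := map tr_ty G.
Definition tr_lin (D : lin aty) : lin cty := fun n => option_map tr_ty (D n).

(* A term typed under mailbox type B only uses its mailbox through receive
   and self, so it is well typed after translation as soon as the mailbox
   reference it is given has type Chan [[B]]; since the translation inserts
   binders (for ch, chMb and f), term typing is proved for every renaming of
   variables that respects the translated contexts.  Configurations then
   translate rule by rule, the translation of linear environments commuting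
   with splitting, extension and singletons; an actor becomes its buffer,
   which owns its name, in parallel with a thread owning nothing. *)
From Stdlib Require Import List FunctionalExtensionality.

Scheme aval_ty_mut := Induction for aval_ty Sort Prop
with atm_ty_mut := Induction for atm_ty Sort Prop.
Combined Scheme aty_mut from aval_ty_mut, atm_ty_mut.

Lemma nth_error_tr_env (G : list aty) (x : nat) (A : aty) :
  nth_error G x = Some A -> nth_error (tr_env G) x = Some (tr_ty A).
Proof. intros HA. unfold tr_env. rewrite nth_error_map, HA. reflexivity. Qed.

Definition tr_renaming (G : list aty) (G' : list cty) (rho : nat -> nat) : Prop :=
  forall x A, nth_error G x = Some A -> nth_error G' (rho x) = Some (tr_ty A).

Lemma tr_renaming_id (G : list aty) : tr_renaming G (tr_env G) (fun n => n).
Proof. intros x A. apply nth_error_tr_env. Qed.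

Lemma tr_renaming_up (G : list aty) (G' : list cty) (rho : nat -> nat) (A : aty) :
  tr_renaming G G' rho -> tr_renaming (A :: G) (tr_ty A :: G') (up rho).
Proof. intros Hrho [|x] A' Hx; simpl in *; [congruence | auto]. Qed.

Lemma tr_renaming_weaken (G : list aty) (G' : list cty) (rho : nat -> nat) (T : cty) :
  tr_renaming G G' rho -> tr_renaming G (T :: G') (fun n => S (rho n)).
Proof. intros Hrho x A Hx. simpl. auto. Qed.

Lemma chref_shift_typed (G N : list cty) (c : chref) (T T' : cty) :
  cval_ty G N (chref_val c) T -> cval_ty (T' :: G) N (chref_val (chref_shift c)) T.
Proof. destruct c; simpl; inversion 1; subst; constructor; assumption. Qed.

Lemma tr_typed : forall (G N : list aty),
  (forall V A, aval_ty G N V A ->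
     forall G' rho, tr_renaming G G' rho ->
     cval_ty G' (tr_env N) (tr_val rho V) (tr_ty A)) /\
  (forall B M A, atm_ty G N B M A ->
     forall G' rho c, tr_renaming G G' rho ->
     cval_ty G' (tr_env N) (chref_val c) (CChan (tr_ty B)) ->
     ctm_ty G' (tr_env N) (tr_tm rho c M) (tr_ty A)).
Proof.
  apply aty_mut; intros; simpl.
  - constructor. auto.
  - constructor. apply nth_error_tr_env. assumption.
  - constructor.
  - (* the body sees ch as variable 0 and x as variable 1 *)
    do 3 constructor. apply H.
    + intros [|x] A' Hx; simpl in *; [congruence | auto].
    + constructor. reflexivity.
  - constructor. auto.
  - econstructor; [now apply H | apply H0].
    + now apply tr_renaming_up.
    + now apply chref_shift_typed.
  - econstructor.
    + econstructor; [now apply H | now apply H0].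
    + econstructor; [constructor; reflexivity | now apply chref_shift_typed].
  - (* chMb is variable 0 in the spawned term *)
    apply CT_Let with (A := CChan (tr_ty A)); [constructor |].
    econstructor.
    + constructor. apply H.
      * now apply tr_renaming_weaken.
      * constructor. reflexivity.
    + do 2 constructor. reflexivity.
  - econstructor; [now apply H | now apply H0].
  - constructor. assumption.
  - constructor. assumption.
Qed.

Lemma tr_lin_split (D D1 D2 : lin aty) :
  lin_split D D1 D2 -> lin_split (tr_lin D) (tr_lin D1) (tr_lin D2).
Proof.
  intros HD n. unfold tr_lin.
  destruct (HD n) as [[E1 E2] | [E1 E2]]; [left | right]; rewrite E1, E2; auto.
Qed.

Lemma tr_lin_ext (D : lin aty) (A : aty) :
  tr_lin (lin_ext D A) = lin_ext (tr_lin D) (tr_ty A).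
Proof. apply functional_extensionality. intros [|n]; reflexivity. Qed.

Lemma tr_lin_single (a : nat) (A : aty) :
  tr_lin (lin_single a A) = lin_single a (tr_ty A).
Proof.
  apply functional_extensionality. intros n. unfold tr_lin, lin_single.
  destruct (Nat.eqb n a); reflexivity.
Qed.

Lemma lin_split_single_empty {T : Type} (a : nat) (A : T) :
  lin_split (lin_single a A) (lin_single a A) lin_empty.
Proof. intros n. right. split; reflexivity. Qed.

Lemma tr_actor_typed (G N : list aty) (a : nat) (A : aty) (M : atm) (vs : list aval) :
  nth_error N a = Some (ARef A) ->
  atm_ty G N A M AUnit ->
  (forall V, In V vs -> aval_ty G N V A) ->
  cconf_ty (tr_env G) (tr_env N) (lin_single a (tr_ty A)) (tr_conf (AActor a M vs)).
Proof.
  intros Ha HM Hvs. simpl.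
  apply CC_Par with (D1 := lin_single a (tr_ty A)) (D2 := lin_empty);
    [apply lin_split_single_empty | constructor | constructor].
  - apply (nth_error_tr_env _ _ _ Ha).
  - intros V' HV'. apply in_map_iff in HV' as [V [<- HV]].
    apply (proj1 (tr_typed G N)); [auto | apply tr_renaming_id].
  - apply (proj2 (tr_typed G N) A M AUnit HM); [apply tr_renaming_id |].
    constructor. apply (nth_error_tr_env _ _ _ Ha).
Qed.

Theorem theorem18 :
  forall (G N : list aty) (D : lin aty) (c : aconf),
    aconf_ty G N D c ->
    cconf_ty (tr_env G) (tr_env N) (tr_lin D) (tr_conf c).
Proof.
  intros G N D c Hc. induction Hc as [G N D D1 D2 c d HD _ IH1 _ IH2
                                     | G N D A c _ IH
                                     | G N a A M vs Ha HM Hvs].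
  - apply CC_Par with (D1 := tr_lin D1) (D2 := tr_lin D2);
      [apply tr_lin_split |..]; assumption.
  - apply CC_Nu with (A := tr_ty A). rewrite <- tr_lin_ext. exact IH.
  - rewrite tr_lin_single. now apply tr_actor_typed.
Qed.
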